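(* Let $T_1$ and $T_2$ be two continuous transitive maps of a compact metric space $X$ which commute ($T_1\circ T_2=T_2\circ T_1$). Then $G_k(T_1)=G_k(T_2)$ for all $k\ge1$. In particular, if $T$ and $T^m$ (for some $m\ge2$) are both transitive, then $G_k(T)=G_k(T^m)$ for all $k\ge1$.
   Context: A continuous map $S:X\to X$ is transitive if some orbit $\{S^nx:n\ge0\}$ is dense in $X$. For such $S$: $G_0(S)$ is the set of $\lambda\in\mathbb{C}$ for which there exists a nonzero $h\in C(X)$ with $h\circ S=\lambda h$ (identified with constant functions); for $k\ge1$, $G_k(S)=\{h\in C(X): |h(x)|=1\ \forall x,\ (h\circ S)\overline h\in G_{k-1}(S)\}$. *)

From Stdlib Require Import Reals List.
Open Scope R_scope.

(* Complex numbers as pairs (real part, imaginary part). *)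
Definition Cplx : Type := (R * R)%type.
Definition Cmul (z w : Cplx) : Cplx :=
  (fst z * fst w - snd z * snd w, fst z * snd w + snd z * fst w).
Definition Cconj (z : Cplx) : Cplx := (fst z, - snd z).
Definition Cmod (z : Cplx) : R := sqrt (fst z * fst z + snd z * snd z).
Definition C0 : Cplx := (0, 0).
Definition Cdist (z w : Cplx) : R := Cmod (fst z - fst w, snd z - snd w).

Definition is_metric {X : Type} (d : X -> X -> R) : Prop :=
  (forall x y, 0 <= d x y) /\
  (forall x y, d x y = 0 <-> x = y) /\
  (forall x y, d x y = d y x) /\
  (forall x y z, d x z <= d x y + d y z).

Definition is_open {X : Type} (d : X -> X -> R) (U : X -> Prop) : Prop :=
  forall x, U x -> exists eps, 0 < eps /\ forall y, d x y < eps -> U y.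

Definition compact_space {X : Type} (d : X -> X -> R) : Prop :=
  forall (I : Type) (U : I -> X -> Prop),
    (forall i, is_open d (U i)) ->
    (forall x, exists i, U i x) ->
    exists l : list I, forall x, exists i, In i l /\ U i x.

Definition continuous_map {X : Type} (d : X -> X -> R) (S : X -> X) : Prop :=
  forall x eps, 0 < eps -> exists delta, 0 < delta /\
    forall y, d x y < delta -> d (S x) (S y) < eps.

Definition continuous_C {X : Type} (d : X -> X -> R) (h : X -> Cplx) : Prop :=
  forall x eps, 0 < eps -> exists delta, 0 < delta /\
    forall y, d x y < delta -> Cdist (h x) (h y) < eps.

Fixpoint iter {X : Type} (n : nat) (S : X -> X) (x : X) : X :=
  match n with
  | O => x
  | Datatypes.S n' => S (iter n' S x)
  end.

Definition transitive {X : Type} (d : X -> X -> R) (S : X -> X) : Prop :=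
  exists x, forall y eps, 0 < eps -> exists n : nat, d (iter n S x) y < eps.

(* G_k(S) as a set of functions X -> Cplx.  G_0(S) is the set of eigenvalues
   lambda (with a nonzero continuous eigenfunction), identified with the
   constant functions x |-> lambda. *)
Fixpoint G {X : Type} (d : X -> X -> R) (k : nat) (S : X -> X) (h : X -> Cplx)
  : Prop :=
  match k with
  | O => exists lambda : Cplx,
           (forall x, h x = lambda) /\
           exists g : X -> Cplx, continuous_C d g /\ (exists x, g x <> C0) /\
             forall x, g (S x) = Cmul lambda (g x)
  | Datatypes.S k' =>
      continuous_C d h /\ (forall x, Cmod (h x) = 1) /\
      G d k' S (fun x => Cmul (h (S x)) (Cconj (h x)))
  end.

(* Write D_i h := (h o T_i) * conj h.  When T1 and T2 commute, so do D_1 and D_2.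
   If h is in G_1(T1), then D_1 h is a unimodular constant, so D_1 (D_2 h) = D_2 (D_1 h) = 1:
   D_2 h is T1-invariant, hence constant since T1 is transitive, and h is in G_1(T2).
   For h in G_(k+2)(T1), induction gives D_1 h in G_(k+1)(T2), so D_1 (D_2 h) = D_2 (D_1 h)
   lies in G_k(T2); it lies in G_k(T1) as well (by the induction hypothesis with T1 and T2
   swapped, or directly when k = 0), i.e. D_2 h is in G_(k+1)(T1), hence in G_(k+1)(T2). *)

From Stdlib Require Import Reals List Lra FunctionalExtensionality.
From Coquelicot Require Import Coquelicot.
Open Scope R_scope.

(* Neighbourhoods for the modulus; Coquelicot's canonical uniform structure on [C] is
   the product one. *)
Notation Clocally := (@locally (AbsRing_UniformSpace C_AbsRing)).

Lemma Cmod_Complex (z : Cplx) : Cmod z = Complex.Cmod z.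
Proof. unfold Cmod, Complex.Cmod. f_equal. ring. Qed.

Lemma Cdist_Cmod (z w : Cplx) : Cdist z w = Complex.Cmod (w - z)%C.
Proof.
  unfold Cdist. rewrite Cmod_Complex, <- Cmod_opp.
  f_equal. unfold Cminus, Cplus, Copp; simpl; f_equal; ring.
Qed.

Lemma Cdist_ball (z w : Cplx) (eps : R) :
  Cdist z w < eps <-> @ball (AbsRing_UniformSpace C_AbsRing) z eps w.
Proof. rewrite Cdist_Cmod. reflexivity. Qed.

Lemma Cdist_eq_0 (z w : C) : (forall eps, 0 < eps -> Cdist z w < eps) -> z = w.
Proof.
  intros Hsmall.
  assert (Hdist : Complex.Cmod (w - z)%C = 0).
  { rewrite <- Cdist_Cmod.
    destruct (Rle_lt_dec (Cdist z w) 0) as [Hle | Hpos].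
    - apply Rle_antisym; [exact Hle | rewrite Cdist_Cmod; apply Cmod_ge_0].
    - specialize (Hsmall _ Hpos). lra. }
  apply Cmod_eq_0 in Hdist.
  replace w with ((w - z) + z)%C by ring. rewrite Hdist. ring.
Qed.

Lemma Cmod_Cmul (z w : Cplx) : Cmod (Cmul z w) = Cmod z * Cmod w.
Proof. rewrite !Cmod_Complex. apply Cmod_mult. Qed.

Lemma Cmod_Cconj (z : Cplx) : Cmod (Cconj z) = Cmod z.
Proof. rewrite !Cmod_Complex. apply Cmod_conj. Qed.

Lemma Cmod_eq_1_neq_0 (z : Cplx) : Cmod z = 1 -> z <> C0.
Proof.
  intros Hz ->. rewrite Cmod_Complex in Hz.
  change (Complex.Cmod (RtoC 0) = 1) in Hz. rewrite Cmod_0 in Hz. lra.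
Qed.

Lemma Cmul_Cconj_r (z : Cplx) : Cmod z = 1 -> Cmul z (Cconj z) = (1, 0).
Proof.
  rewrite Cmod_Complex. intros Hz.
  change ((z * Cconj z)%C = RtoC 1). rewrite <- Cmod2_conj, Hz. now rewrite pow1.
Qed.

Lemma Cmul_Cconj_cancel (a b : Cplx) : Cmod b = 1 -> Cmul (Cmul a (Cconj b)) b = a.
Proof.
  intros Hb. change ((a * Cconj b * b)%C = a).
  rewrite <- Cmult_assoc, (Cmult_comm (Cconj b)).
  change ((a * Cmul b (Cconj b))%C = a). rewrite (Cmul_Cconj_r b Hb).
  apply Cmult_1_r.
Qed.

Definition coboundary {X : Type} (S : X -> X) (h : X -> Cplx) (x : X) : Cplx :=
  Cmul (h (S x)) (Cconj (h x)).

Definition unimodular {X : Type} (h : X -> Cplx) : Prop := forall x, Cmod (h x) = 1.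

Section Coboundary.

Variable X : Type.
Implicit Types (S : X -> X) (h u : X -> Cplx).

Lemma unimodular_coboundary S h : unimodular h -> unimodular (coboundary S h).
Proof. intros Hh x. unfold coboundary. rewrite Cmod_Cmul, Cmod_Cconj, !Hh. ring. Qed.

Lemma coboundary_mul_cancel S h x :
  unimodular h -> Cmul (coboundary S h x) (h x) = h (S x).
Proof. intros Hh. apply Cmul_Cconj_cancel, Hh. Qed.

Lemma coboundary_comm (T1 T2 : X -> X) h :
  (forall x, T1 (T2 x) = T2 (T1 x)) ->
  coboundary T1 (coboundary T2 h) = coboundary T2 (coboundary T1 h).
Proof.
  intros Hcomm. apply functional_extensionality. intros x.
  unfold coboundary, Cmul, Cconj. rewrite Hcomm. simpl. f_equal; ring.
Qed.

Lemma coboundary_eq_1 S u x :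
  unimodular u -> coboundary S u x = (1, 0) -> u (S x) = u x.
Proof.
  intros Hu H1. rewrite <- (coboundary_mul_cancel S u x Hu), H1.
  apply Cmult_1_l.
Qed.

End Coboundary.

Section Continuity.

Variables (X : Type) (d : X -> X -> R).

Definition dlocally (x : X) (P : X -> Prop) : Prop :=
  exists eps, 0 < eps /\ forall y, d x y < eps -> P y.

#[local] Instance dlocally_filter (x : X) : Filter (dlocally x).
Proof.
  constructor.
  - exists 1; split; [lra | easy].
  - intros P Q [e1 [He1 HP]] [e2 [He2 HQ]].
    exists (Rmin e1 e2); split; [now apply Rmin_pos |].
    intros y Hy; split; [apply HP | apply HQ];
      eapply Rlt_le_trans; eauto using Rmin_l, Rmin_r.
  - intros P Q HPQ [e [He HP]].
    exists e; split; [exact He | intros y Hy; apply HPQ, HP, Hy].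
Qed.

Lemma continuous_map_filterlim (S : X -> X) :
  continuous_map d S -> forall x, filterlim S (dlocally x) (dlocally (S x)).
Proof.
  intros HS x P [e [He HP]].
  destruct (HS x e He) as [delta [Hdelta Hclose]].
  exists delta; split; auto.
Qed.

Lemma continuous_C_filterlim (h : X -> Cplx) :
  continuous_C d h <-> forall x, filterlim h (dlocally x) (Clocally (h x)).
Proof.
  split.
  - intros Hh x P [eps HP].
    destruct (Hh x eps (cond_pos eps)) as [delta [Hdelta Hclose]].
    exists delta; split; auto.
    intros y Hy. apply HP, Cdist_ball, Hclose, Hy.
  - intros Hh x eps Heps.
    destruct (Hh x (fun z => Cdist (h x) z < eps)) as [delta [Hdelta Hclose]].
    + exists (mkposreal eps Heps). intros z Hz. apply Cdist_ball, Hz.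
    + exists delta; split; [exact Hdelta | exact Hclose].
Qed.

Lemma filterlim_Cconj (z : Cplx) : filterlim Cconj (Clocally z) (Clocally (Cconj z)).
Proof.
  intros P [eps HP]. exists eps. intros w Hw. apply HP.
  change (Complex.Cmod (Cconj w - Cconj z)%C < eps).
  rewrite <- Cminus_conj, Cmod_conj. exact Hw.
Qed.

Lemma continuous_coboundary (S : X -> X) (h : X -> Cplx) :
  continuous_map d S -> continuous_C d h -> continuous_C d (coboundary S h).
Proof.
  rewrite !continuous_C_filterlim. intros HS Hh x.
  apply (filterlim_comp_2 (G := Clocally (h (S x))) (H := Clocally (Cconj (h x)))
           (fun y => h (S y)) (fun y => Cconj (h y)) (@mult C_AbsRing)).
  - apply filterlim_comp with (dlocally (S x));
      [apply continuous_map_filterlim, HS | apply Hh].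
  - apply filterlim_comp with (Clocally (h x)); [apply Hh | apply filterlim_Cconj].
  - exact (filterlim_mult (K := C_AbsRing) (h (S x)) (Cconj (h x))).
Qed.

Lemma continuous_map_iter (T : X -> X) (n : nat) :
  continuous_map d T -> continuous_map d (iter n T).
Proof.
  intros HT. induction n as [|n IHn]; intros x eps Heps.
  - exists eps; split; auto.
  - destruct (HT (iter n T x) eps Heps) as [delta1 [Hdelta1 Hclose1]].
    destruct (IHn x delta1 Hdelta1) as [delta2 [Hdelta2 Hclose2]].
    exists delta2; split; [exact Hdelta2 | intros y Hy; apply Hclose1, Hclose2, Hy].
Qed.

Hypothesis d_sym : forall x y, d x y = d y x.

Lemma invariant_constant (S : X -> X) (u : X -> Cplx) :
  transitive d S -> continuous_C d u -> (forall x, u (S x) = u x) ->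
  exists c, forall x, u x = c.
Proof.
  intros [x0 Hdense] Hu Hinv. exists (u x0). intros y.
  assert (Horbit : forall n, u (iter n S x0) = u x0).
  { induction n as [|n IHn]; simpl; [reflexivity | now rewrite Hinv]. }
  apply Cdist_eq_0. intros eps Heps.
  destruct (Hu y eps Heps) as [delta [Hdelta Hclose]].
  destruct (Hdense y delta Hdelta) as [n Hn].
  rewrite <- (Horbit n). apply Hclose. now rewrite d_sym.
Qed.

End Continuity.

Section Transfer.

Variables (X : Type) (d : X -> X -> R).
Hypothesis d_sym : forall x y, d x y = d y x.

Definition commuting_transitive (T1 T2 : X -> X) : Prop :=
  continuous_map d T1 /\ continuous_map d T2 /\
  transitive d T1 /\ transitive d T2 /\ (forall x, T1 (T2 x) = T2 (T1 x)).

Lemma commuting_transitive_sym (T1 T2 : X -> X) :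
  commuting_transitive T1 T2 -> commuting_transitive T2 T1.
Proof.
  intros (HT1 & HT2 & Htr1 & Htr2 & Hcomm).
  repeat split; try assumption. intros x. symmetry. apply Hcomm.
Qed.

Lemma G0_coboundary (S : X -> X) (h : X -> Cplx) (c : Cplx) :
  transitive d S -> continuous_C d h -> unimodular h ->
  (forall x, coboundary S h x = c) -> G d 0 S (coboundary S h).
Proof.
  intros [x0 _] Hh Hh1 Hc. exists c. split; [exact Hc |].
  exists h. split; [exact Hh | split].
  - exists x0. apply Cmod_eq_1_neq_0, Hh1.
  - intros x. rewrite <- (Hc x). symmetry. apply coboundary_mul_cancel, Hh1.
Qed.

Definition G_transfer (k : nat) : Prop :=
  forall T1 T2, commuting_transitive T1 T2 ->
  forall h, G d k T1 h -> G d k T2 h.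

(* At level 0 this holds because u is then an eigenfunction of T1; above level 0 it is
   [G_transfer] with T1 and T2 swapped. *)
Definition G_coboundary_transfer (k : nat) : Prop :=
  forall T1 T2, commuting_transitive T1 T2 ->
  forall u, continuous_C d u -> unimodular u ->
  G d k T2 (coboundary T1 u) -> G d k T1 (coboundary T1 u).

Lemma G_transfer_1 : G_transfer 1.
Proof.
  intros T1 T2 (HT1 & HT2 & Htr1 & Htr2 & Hcomm) h (Hh & Hh1 & lambda & Hlambda & _).
  change (forall x, coboundary T1 h x = lambda) in Hlambda.
  assert (Hlambda1 : Cmod lambda = 1).
  { destruct Htr1 as [x0 _]. rewrite <- (Hlambda x0). now apply unimodular_coboundary. }
  assert (Hinv : forall x, coboundary T2 h (T1 x) = coboundary T2 h x).
  { intros x. apply coboundary_eq_1; [now apply unimodular_coboundary |].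
    rewrite coboundary_comm by exact Hcomm.
    unfold coboundary at 1. rewrite !Hlambda. now apply Cmul_Cconj_r. }
  destruct (invariant_constant X d d_sym T1 (coboundary T2 h)) as [c Hc];
    [exact Htr1 | now apply continuous_coboundary | exact Hinv |].
  split; [exact Hh | split; [exact Hh1 |]].
  now apply (G0_coboundary T2 h c).
Qed.

Lemma G_coboundary_transfer_0 : G_coboundary_transfer 0.
Proof.
  intros T1 T2 (_ & _ & Htr1 & _) u Hu Hu1 (mu & Hmu & _).
  now apply (G0_coboundary T1 u mu).
Qed.

Lemma G_coboundary_transfer_succ (k : nat) :
  G_transfer (S k) -> G_coboundary_transfer (S k).
Proof.
  intros HP T1 T2 Hpair u _ _. apply HP, commuting_transitive_sym, Hpair.
Qed.

Lemma G_transfer_step (k : nat) :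
  G_transfer (S k) -> G_coboundary_transfer k -> G_transfer (S (S k)).
Proof.
  intros HP HQ T1 T2 Hpair h (Hh & Hh1 & HG).
  pose proof Hpair as (HT1 & HT2 & _ & _ & Hcomm).
  split; [exact Hh | split; [exact Hh1 |]].
  change (G d (S k) T2 (coboundary T2 h)).
  apply (HP T1 T2 Hpair).
  split; [now apply continuous_coboundary |].
  split; [now apply unimodular_coboundary |].
  change (G d k T1 (coboundary T1 (coboundary T2 h))).
  apply (HQ T1 T2 Hpair);
    [now apply continuous_coboundary | now apply unimodular_coboundary |].
  rewrite coboundary_comm by exact Hcomm.
  destruct (HP T1 T2 Hpair (coboundary T1 h) HG) as (_ & _ & HG2). exact HG2.
Qed.

Lemma G_transfer_succ (k : nat) : G_transfer (S k).
Proof.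
  enough (Hpair : G_transfer (S k) /\ G_transfer (S (S k))) by apply Hpair.
  induction k as [|k [HPk HPSk]].
  - split; [exact G_transfer_1 |].
    apply G_transfer_step; [exact G_transfer_1 | exact G_coboundary_transfer_0].
  - split; [exact HPSk |].
    apply G_transfer_step; [exact HPSk | now apply G_coboundary_transfer_succ].
Qed.

Corollary G_succ_commuting_iff (T1 T2 : X -> X) (k : nat) (h : X -> Cplx) :
  commuting_transitive T1 T2 -> (G d (S k) T1 h <-> G d (S k) T2 h).
Proof.
  intros Hpair.
  split; apply G_transfer_succ; [exact Hpair | now apply commuting_transitive_sym].
Qed.

End Transfer.

Lemma iter_commute {X : Type} (T : X -> X) (n : nat) (x : X) :
  iter n T (T x) = T (iter n T x).
Proof. induction n as [|n IHn]; simpl; congruence. Qed.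

Theorem lemma2p2 (X : Type) (d : X -> X -> R)
  (Hmetric : is_metric d) (Hcompact : compact_space d) :
  (forall T1 T2 : X -> X,
     continuous_map d T1 -> continuous_map d T2 ->
     transitive d T1 -> transitive d T2 ->
     (forall x, T1 (T2 x) = T2 (T1 x)) ->
     forall k : nat, (1 <= k)%nat ->
       forall h : X -> Cplx, G d k T1 h <-> G d k T2 h) /\
  (forall (T : X -> X) (m : nat),
     continuous_map d T -> (2 <= m)%nat ->
     transitive d T -> transitive d (iter m T) ->
     forall k : nat, (1 <= k)%nat ->
       forall h : X -> Cplx, G d k T h <-> G d k (iter m T) h).
Proof.
  destruct Hmetric as (_ & _ & d_sym & _). split.
  - intros T1 T2 HT1 HT2 Htr1 Htr2 Hcomm [|k] Hk h; [inversion Hk |].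
    apply G_succ_commuting_iff; [exact d_sym | now repeat split].
  - intros T m HT _ Htr Htrm [|k] Hk h; [inversion Hk |].
    apply G_succ_commuting_iff; [exact d_sym |].
    repeat split; try assumption; [now apply continuous_map_iter |].
    intros x. symmetry. apply iter_commute.
Qed.
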